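(* Let $\alpha\in\mathbb{N}=\{0,1,2,\dots\}$ and let $m$ be a positive odd integer with $m>4\alpha+2$. Let $\mathbb{S}=\langle 4,4\alpha+2,m\rangle$. Then the set of Betti elements of $\mathbb{S}$ is $Betti(\mathbb{S})=\{8\alpha+4,\,2m\}$.
   Context: $\mathbb{N}$ denotes the set of nonnegative integers. For positive integers $a_1,\dots,a_e$ with $\gcd=1$, $\langle a_1,\dots,a_e\rangle=\{\lambda_1a_1+\dots+\lambda_ea_e:\lambda_i\in\mathbb{N}\}$ is a numerical semigroup. For $a\in\mathbb{S}$, the set of factorizations of $a$ with respect to the listed generators is $Z(a)=\{(\eta_1,\dots,\eta_e)\in\mathbb{N}^e:\eta_1a_1+\dots+\eta_ea_e=a\}$. For $x,y\in\mathbb{N}^e$, $\gcd\{x,y\}$ is the componentwise minimum. For $a\in\mathbb{S}\setminus\{0\}$, let $\nabla_a$ be the graph with vertex set $Z(a)$ in which $x,y$ are joined by an edge if $\gcd\{x,y\}\neq 0$. The element $a$ is a Betti element of $\mathbb{S}$ if $\nabla_a$ is disconnected; $Betti(\mathbb{S})$ denotes the set of Betti elements. *)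

From mathcomp Require Import all_boot.
From Stdlib Require Import Relations.
Set Implicit Arguments. Unset Strict Implicit. Unset Printing Implicit Defensive.

Definition is_factorization (gens : seq nat) (a : nat) (x : seq nat) : Prop :=
  size x = size gens /\ \sum_(i < size gens) nth 0 x i * nth 0 gens i = a.

Definition in_semigroup (gens : seq nat) (a : nat) : Prop :=
  exists x, is_factorization gens a x.

Definition gcd_vec (x y : seq nat) : seq nat :=
  [seq minn p.1 p.2 | p <- zip x y].

Definition nabla_edge (gens : seq nat) (a : nat) (x y : seq nat) : Prop :=
  is_factorization gens a x /\ is_factorization gens a y /\
  gcd_vec x y <> nseq (size gens) 0.

Definition nabla_connected (gens : seq nat) (a : nat) : Prop :=
  forall x y, is_factorization gens a x -> is_factorization gens a y ->
    clos_refl_trans (seq nat) (nabla_edge gens a) x y.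

Definition is_betti (gens : seq nat) (a : nat) : Prop :=
  in_semigroup gens a /\ a <> 0 /\ ~ nabla_connected gens a.

From mathcomp Require Import all_boot.
From mathcomp Require Import zify.
From Stdlib Require Import Relations Lia.

Set Implicit Arguments.
Unset Strict Implicit.
Unset Printing Implicit Defensive.

(* With b = 4 alpha + 2, the trades 2 b = (2 alpha + 1) 4 and 2 m = c 4 + b
   (c = (m - 1)/2 - alpha) turn any factorization (p, q, r) into one with
   q, r <= 1; such a reduced factorization is unique, because the parity of a
   fixes r (m is odd, 4 and b are even) and then a - r m modulo 4 fixes q.
   A trade is an edge of the graph unless the factorization being traded is
   (0, 2, 0) or (0, 0, 2), so every graph other than those of 2 b and 2 m is
   connected.  In these two graphs (0, 2, 0) resp. (0, 0, 2) is an isolated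
   vertex, although 2 b and 2 m have other factorizations. *)

Lemma clos_rt_sym (A : Type) (R : relation A) :
  symmetric A R -> symmetric A (clos_refl_trans A R).
Proof.
move=> R_sym x y; elim=> [u v /R_sym | u | u v w _ IHuv _ IHvw].
- exact: rt_step.
- exact: rt_refl.
- exact: rt_trans IHvw IHuv.
Qed.

Lemma gcd_vecC (x y : seq nat) : gcd_vec x y = gcd_vec y x.
Proof.
elim: x y => [|u x IHx] [|v y] //=.
by rewrite /gcd_vec /= minnC -/(gcd_vec x y) IHx.
Qed.

Lemma nabla_edge_sym (gens : seq nat) (a : nat) :
  symmetric (seq nat) (nabla_edge gens a).
Proof.
by move=> x y [x_fact [y_fact gcd_nz]]; split; [|split]; rewrite // gcd_vecC.
Qed.

Lemma nabla_disconnected_isolated (gens : seq nat) (a : nat) (u v : seq nat) :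
  is_factorization gens a u -> is_factorization gens a v -> v <> u ->
  (forall w, nabla_edge gens a u w -> w = u) ->
  ~ nabla_connected gens a.
Proof.
move=> u_fact v_fact v_neq_u u_isolated /(_ u v u_fact v_fact) path_uv.
suff reach_u x y : clos_refl_trans _ (nabla_edge gens a) x y -> x = u -> y = u.
  exact/v_neq_u/(reach_u _ _ path_uv).
elim=> [x' y' /[swap] -> | // | x' y' z _ IHxy _ IHyz /IHxy/IHyz //].
exact: u_isolated.
Qed.

Lemma is_factorization3P (a1 a2 a3 a : nat) (x : seq nat) :
  is_factorization [:: a1; a2; a3] a x <->
  exists p q r, x = [:: p; q; r] /\ p * a1 + q * a2 + r * a3 = a.
Proof.
rewrite /is_factorization !big_ord_recl big_ord0 /=; split.
- case: x => [|p [|q [|r [|? ?]]]] [] //= _ <-.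
  by exists p, q, r; rewrite addn0 !addnA.
- by case=> p [q [r [-> <-]]]; rewrite addn0 !addnA.
Qed.

Lemma nabla_edge3P (a1 a2 a3 a p q r p' q' r' : nat) :
  nabla_edge [:: a1; a2; a3] a [:: p; q; r] [:: p'; q'; r'] <->
  [/\ p * a1 + q * a2 + r * a3 = a, p' * a1 + q' * a2 + r' * a3 = a
    & [|| 0 < minn p p', 0 < minn q q' | 0 < minn r r']].
Proof.
rewrite /nabla_edge /gcd_vec /= !is_factorization3P; split.
- case=> [[? [? [? [[<- <- <-] fact]]]] [[? [? [? [[<- <- <-] fact']]]] gcd_nz]].
  split=> //; move: gcd_nz.
  by case: (minn p p') => [|?]; case: (minn q q') => [|?]; case: (minn r r').
- case=> fact fact' common; split; [|split]; first by exists p, q, r.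
    by exists p', q', r'.
  by case=> minp minq minr; move: common; rewrite minp minq minr.
Qed.

Section BettiElements.

Variables alpha m : nat.
Hypothesis m_odd : odd m.
Hypothesis b_lt_m : 4 * alpha + 2 < m.

Local Notation b := (4 * alpha + 2).
Local Notation S := [:: 4; b; m].

Let c := m./2 - alpha.

Let trade_m : 2 * m = c * 4 + b.
Proof. rewrite /c; lia. Qed.

Lemma connect_reduced_factorization (a p q r : nat) :
  a <> 2 * b -> a <> 2 * m -> p * 4 + q * b + r * m = a ->
  exists p' q' r', [/\ q' <= 1, r' <= 1, p' * 4 + q' * b + r' * m = a
    & clos_refl_trans _ (nabla_edge S a) [:: p; q; r] [:: p'; q'; r']].
Proof.
move=> a_neq_2b a_neq_2m.
have [n qr_lt] := ubnP (q + r).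
elim: n p q r qr_lt => // n IHn p q r; rewrite ltnS => qr_le fact.
have trade_to x y z : x * 4 + y * b + z * m = a -> y + z < q + r ->
    [|| 0 < minn p x, 0 < minn q y | 0 < minn r z] ->
    exists p' q' r', [/\ q' <= 1, r' <= 1, p' * 4 + q' * b + r' * m = a
      & clos_refl_trans _ (nabla_edge S a) [:: p; q; r] [:: p'; q'; r']].
  move=> fact_xyz lt_xyz common.
  have [p' [q' [r' [q'_le r'_le fact' path']]]] :=
    IHn x y z (leq_trans lt_xyz qr_le) fact_xyz.
  exists p', q', r'; split=> //; apply: rt_trans path'.
  exact/rt_step/nabla_edge3P.
case: (leqP 2 q) => [q_ge2 | q_le1].
  apply: (trade_to (p + (2 * alpha + 1)) (q - 2) r); [nia | lia | nia].
case: (leqP 2 r) => [r_ge2 | r_le1].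
  apply: (trade_to (p + c) (q + 1) (r - 2)); [nia | lia | nia].
by exists p, q, r; split=> //; exact: rt_refl.
Qed.

Lemma reduced_factorization_uniq p q r p' q' r' :
  q <= 1 -> r <= 1 -> q' <= 1 -> r' <= 1 ->
  p * 4 + q * b + r * m = p' * 4 + q' * b + r' * m ->
  [:: p; q; r] = [:: p'; q'; r'].
Proof.
by move: q r q' r' => [|[|//]] [|[|//]] [|[|//]] [|[|//]] _ _ _ _ same_value;
  congr [:: _; _; _]; lia.
Qed.

Lemma nabla_connected_other (a : nat) :
  a <> 2 * b -> a <> 2 * m -> nabla_connected S a.
Proof.
move=> a_neq_2b a_neq_2m x y.
move=> /is_factorization3P [p [q [r [-> fact]]]].
move=> /is_factorization3P [p' [q' [r' [-> fact']]]].
have [u1 [u2 [u3 [u2_le u3_le u_fact path_u]]]] :=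
  connect_reduced_factorization a_neq_2b a_neq_2m fact.
have [v1 [v2 [v3 [v2_le v3_le v_fact path_v]]]] :=
  connect_reduced_factorization a_neq_2b a_neq_2m fact'.
have u_eq_v : [:: u1; u2; u3] = [:: v1; v2; v3].
  by apply: reduced_factorization_uniq; rewrite // u_fact v_fact.
apply: rt_trans path_u _; rewrite u_eq_v.
exact: clos_rt_sym (@nabla_edge_sym _ _) _ _ path_v.
Qed.

Lemma betti_twice_b : is_betti S (2 * b).
Proof.
have u_fact : is_factorization S (2 * b) [:: 0; 2; 0].
  by apply/is_factorization3P; exists 0, 2, 0; split=> //; lia.
have v_fact : is_factorization S (2 * b) [:: 2 * alpha + 1; 0; 0].
  by apply/is_factorization3P; exists (2 * alpha + 1), 0, 0; split=> //; lia.
split; [by exists [:: 0; 2; 0] | split; first lia].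
apply: (nabla_disconnected_isolated u_fact v_fact) => // w edge.
have [_ [/is_factorization3P [p [q [r [w_eq _]]]] _]] := edge.
subst w; move/nabla_edge3P: edge => [_ fact]; rewrite !min0n /= => q_pos.
case: q => [|[|[|q]]] in fact q_pos *; [by [] | | | nia].
- by case: r => [|r] in fact *; nia.
- by have [-> ->] : p = 0 /\ r = 0 by nia.
Qed.

Lemma betti_twice_m : is_betti S (2 * m).
Proof.
have u_fact : is_factorization S (2 * m) [:: 0; 0; 2].
  by apply/is_factorization3P; exists 0, 0, 2; split=> //; lia.
have v_fact : is_factorization S (2 * m) [:: c; 1; 0].
  by apply/is_factorization3P; exists c, 1, 0; split=> //; lia.
split; [by exists [:: 0; 0; 2] | split; first lia].
apply: (nabla_disconnected_isolated u_fact v_fact) => // w edge.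
have [_ [/is_factorization3P [p [q [r [w_eq _]]]] _]] := edge.
subst w; move/nabla_edge3P: edge => [_ fact]; rewrite !min0n /= => r_pos.
case: r => [|[|[|r]]] in fact r_pos *; [by [] | | | nia].
- by case: q => [|q] in fact *; nia.
- by have [-> ->] : p = 0 /\ q = 0 by nia.
Qed.

End BettiElements.

Theorem theorem3 (alpha m : nat) :
  odd m -> 0 < m -> 4 * alpha + 2 < m ->
  forall a : nat,
    is_betti [:: 4; 4 * alpha + 2; m] a <-> (a = 8 * alpha + 4 \/ a = 2 * m).
Proof.
move=> m_odd _ b_lt_m a.
have -> : 8 * alpha + 4 = 2 * (4 * alpha + 2) by lia.
split; last by case=> ->; [exact: betti_twice_b | exact: betti_twice_m].
case=> _ [_ not_connected].
have [-> | a_neq_2b] := eqVneq a (2 * (4 * alpha + 2)); first by left.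
have [-> | a_neq_2m] := eqVneq a (2 * m); first by right.
by case: not_connected; apply: nabla_connected_other => //; apply/eqP.
Qed.
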